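(* Let $(A,m)$ be a strict $A_\infty$-algebra over a field $\mathbf{F}$, let $\lambda\in\mathbf{F}$ with $\lambda\neq0$ and $a,b\in\mathbf{Z}$, and let $\tilde m_k=\lambda^{ak+b}m_k$ for $k\ge1$. Then there is an $A_\infty$ quasi-isomorphism $(A,\tilde m)\to(A,m)$.
   Context: A strict $A_\infty$-algebra $(A,m)$ over $\mathbf{F}$ is a $\mathbf{Z}$-graded vector space $A=\bigoplus_kA^k$ with graded linear maps $m_n:A^{\otimes n}\to A$ ($n\ge1$) of degree $2-n$ satisfying $\sum_{n=r+s+t}(-1)^{rs+t}m_{r+1+t}(\mathbf{I}^{\otimes r}\otimes m_s\otimes\mathbf{I}^{\otimes t})=0$ for all $n\ge1$ ($r,t\ge0,s\ge1$), with the Koszul sign rule $(f\otimes g)(x\otimes y)=(-1)^{|g||x|}f(x)\otimes g(y)$; $(A,\tilde m)$ is again such an algebra. A homomorphism $f:(A,m^A)\to(B,m^B)$ of strict $A_\infty$-algebras is a family of graded maps $f_n:A^{\otimes n}\to B$ ($n\ge1$) of degree $1-n$ with $\sum_{n=r+s+t}(-1)^{rs+t}f_{r+1+t}(\mathbf{I}^{\otimes r}\otimes m^A_s\otimes\mathbf{I}^{\otimes t})=\sum_{n=i_1+\dots+i_k}(-1)^{\sigma}m^B_k(f_{i_k}\otimes\cdots\otimes f_{i_1})$, where $\sigma=(k-1)(i_1-1)+(k-2)(i_2-1)+\dots+2(i_{k-2}-1)+(i_{k-1}-1)$. It is a quasi-isomorphism if $f_1$ induces an isomorphism $H^*(A,m^A_1)\to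 H^*(B,m^B_1)$. *)

From HB Require Import structures.
From mathcomp Require Import all_boot all_order all_algebra.
Set Implicit Arguments. Unset Strict Implicit. Unset Printing Implicit Defensive.
Import Order.TTheory GRing.Theory Num.Theory.
Local Open Scope ring_scope.

(* A Z-graded F-vector space A = (+)_k A^k is modelled by an F-vector space
   V (lmodType F) together with a predicate [hom k x] meaning "x lies in A^k";
   [graded hom] says the A^k are subspaces and V is their (internal) direct sum.
   A graded linear map A^{(x)n} -> A of degree d is modelled, via the universal
   property of the tensor product, by an n-multilinear map on lists of length n
   sending homogeneous x_1,...,x_n of degrees k_1..k_n into A^{k_1+..+k_n+d}.
   A family (g_n)_{n>=1} is a function [g : nat -> seq V -> V], where only the
   values [g n xs] with [size xs = n] and [n >= 1] are meaningful.
   Identities between maps on A^{(x)n} are checked on pure tensors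
   x_1 (x) ... (x) x_n of homogeneous elements (which suffices by linearity),
   with the Koszul sign rule made explicit. *)

Section Ainf.
Variables (F : fieldType) (V : lmodType F).

Definition homs (hom : int -> V -> Prop) (ks : seq int) (xs : seq V) : Prop :=
  size ks = size xs /\ forall i, (i < size xs)%N -> hom (nth 0 ks i) (nth 0 xs i).

Definition graded (hom : int -> V -> Prop) : Prop :=
  [/\ (forall k, hom k 0),
      (forall k (c : F) x y, hom k x -> hom k y -> hom k (c *: x + y)),
      (forall v : V, exists (ks : seq int) (xs : seq V),
          [/\ uniq ks, homs hom ks xs & v = \sum_(x <- xs) x])
    & (forall (ks : seq int) (xs : seq V), uniq ks -> homs hom ks xs ->
          \sum_(x <- xs) x = 0 -> forall i, nth 0 xs i = 0)].

Definition degsum (ks : seq int) : int := \sum_(k <- ks) k.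

Definition multilinear (g : nat -> seq V -> V) : Prop :=
  forall (xs ys : seq V) (c : F) (u v : V),
    g (size xs + size ys).+1 (xs ++ (c *: u + v) :: ys) =
    c *: g (size xs + size ys).+1 (xs ++ u :: ys)
    + g (size xs + size ys).+1 (xs ++ v :: ys).

Definition graded_family (hom : int -> V -> Prop) (d : nat -> int)
    (g : nat -> seq V -> V) : Prop :=
  forall (n : nat) (ks : seq int) (xs : seq V), (0 < n)%N -> size xs = n ->
    homs hom ks xs -> hom (degsum ks + d n) (g n xs).

(* sum_{n=r+s+t, s>=1} (-1)^{rs+t} outer_{r+1+t}(I^{(x)r} (x) inner_s (x) I^{(x)t})
   applied to x_1 (x) ... (x) x_n, where inner_s has degree 2-s; the Koszul
   sign (-1)^{(2-s)(k_1+...+k_r)} comes from inner_s passing x_1..x_r. *)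
Definition rst_sum (outer inner : nat -> seq V -> V) (n : nat)
    (ks : seq int) (xs : seq V) : V :=
  \sum_(r < n) \sum_(j < n - r)
    let s := j.+1 in let t := (n - r - s)%N in
    (-1) ^ (((r * s + t)%N)%:Z + (2 - s%:Z) * degsum (take r ks)) *:
      outer (r + 1 + t)%N
        (take r xs ++ inner s (take s (drop r xs)) :: drop (r + s) xs).

Definition Ainf_algebra (hom : int -> V -> Prop) (m : nat -> seq V -> V) : Prop :=
  [/\ multilinear m, graded_family hom (fun n => 2 - n%:Z) m
    & forall (n : nat) (ks : seq int) (xs : seq V), (0 < n)%N -> size xs = n ->
        homs hom ks xs -> rst_sum m m n ks xs = 0].

Fixpoint comps_fuel (fuel n : nat) : seq (seq nat) :=
  match fuel with
  | 0 => if n == 0%N then [:: [::]] else [::]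
  | fuel'.+1 =>
      if n == 0%N then [:: [::]] else
      flatten [seq [seq i.+1 :: c | c <- comps_fuel fuel' (n - i.+1)]
              | i <- iota 0 n]
  end.
Definition compositions (n : nat) : seq (seq nat) := comps_fuel n n.

Definition sigma_sign (ii : seq nat) : int :=
  \sum_(j < size ii) ((size ii - 1 - j)%N)%:Z * ((nth 0%N ii j)%:Z - 1).

Fixpoint tens_apply (g : nat -> seq V -> V) (bl : seq nat) (xs : seq V) : seq V :=
  match bl with
  | [::] => [::]
  | b :: bl' => g b (take b xs) :: tens_apply g bl' (drop b xs)
  end.

(* Koszul exponent for g_{b_1} (x) g_{b_2} (x) ... with deg g_b = 1 - b:
   each g_b passes all inputs to the left of its block. *)
Fixpoint koszul_exp (bl : seq nat) (ks : seq int) (pre : int) : int :=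
  match bl with
  | [::] => 0
  | b :: bl' => (1 - b%:Z) * pre
                + koszul_exp bl' (drop b ks) (pre + degsum (take b ks))
  end.

(* homomorphism (A, mA) -> (A, mB) of strict A_infinity-algebras; the right
   hand side is sum_{n = i_1+...+i_k} (-1)^sigma mB_k(f_{i_k} (x) ... (x) f_{i_1}),
   so the leftmost block is f_{i_k}: block list (left to right) = rev ii. *)
Definition Ainf_hom (hom : int -> V -> Prop) (mA mB f : nat -> seq V -> V) : Prop :=
  [/\ multilinear f, graded_family hom (fun n => 1 - n%:Z) f
    & forall (n : nat) (ks : seq int) (xs : seq V), (0 < n)%N -> size xs = n ->
        homs hom ks xs ->
        rst_sum f mA n ks xs =
        \sum_(ii <- compositions n)
          (-1) ^ (sigma_sign ii + koszul_exp (rev ii) ks 0) *: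
            mB (size ii) (tens_apply f (rev ii) xs)].

(* f_1 induces an isomorphism H(A, mA_1) -> H(A, mB_1) (injective and
   surjective on cohomology classes) *)
Definition quasi_iso_on_H (mA mB f : nat -> seq V -> V) : Prop :=
  let dA := fun x => mA 1%N [:: x] in
  let dB := fun x => mB 1%N [:: x] in
  let f1 := fun x => f 1%N [:: x] in
  (forall x, dA x = 0 -> (exists y, f1 x = dB y) -> exists z, x = dA z) /\
  (forall y, dB y = 0 -> exists x, dA x = 0 /\ exists z, y - f1 x = dB z).

Definition Ainf_quasi_iso (hom : int -> V -> Prop) (mA mB f : nat -> seq V -> V)
  : Prop := Ainf_hom hom mA mB f /\ quasi_iso_on_H mA mB f.

End Ainf.

From HB Require Import structures.
From mathcomp Require Import all_boot all_order all_algebra.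
From mathcomp Require Import ring.
From Stdlib Require Import ClassicalEpsilon.
Set Implicit Arguments. Unset Strict Implicit. Unset Printing Implicit Defensive.

Import Order.TTheory GRing.Theory Num.Theory.
Local Open Scope ring_scope.

(* The quasi-isomorphism is strict: f_n = 0 for n >= 2, and f_1 multiplies the
   degree-k component of A by lambda^(2a+b-(a+b)k).  The morphism equations
   reduce to f_1 (mt_n xs) = m_n (f_1 x_1, ..., f_1 x_n), because every other
   composition of n has a block i >= 2 and so a vanishing factor f_i; for
   homogeneous x_j of total degree K both sides are m_n xs scaled by
   lambda^(n(2a+b) - (a+b)K).  Being invertible and commuting with the
   differentials, f_1 is an isomorphism on cohomology.  Extending f_1 from
   homogeneous elements to A uses the uniqueness of homogeneous components. *)

Lemma linear_fun_sum (F : fieldType) (V : lmodType F) (phi : V -> V) (I : Type)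
    (r : seq I) (G : I -> V) :
  linear phi -> phi (\sum_(i <- r) G i) = \sum_(i <- r) phi (G i).
Proof.
move=> phi_lin.
exact: (linear_sum (HB.pack phi (GRing.isLinear.Build _ _ _ _ phi phi_lin))).
Qed.

Lemma linear_fun0 (F : fieldType) (V : lmodType F) (phi : V -> V) :
  linear phi -> phi 0 = 0.
Proof.
by move=> phi_lin; exact: (linear0 (HB.pack phi (GRing.isLinear.Build _ _ _ _ phi phi_lin))).
Qed.

Section GradedScaling.
Variables (F : fieldType) (V : lmodType F) (hom : int -> V -> Prop).

Lemma homs_cons k ks x xs :
  homs hom (k :: ks) (x :: xs) -> hom k x /\ homs hom ks xs.
Proof.
case=> [/= [sz] hxs]; split; first exact: (hxs 0%N).
by split=> // i ilt; apply: (hxs i.+1).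
Qed.

Hypothesis hom_graded : graded hom.

Lemma hom0 k : hom k 0. Proof. by case: hom_graded. Qed.

Lemma homZD k (c : F) x y : hom k x -> hom k y -> hom k (c *: x + y).
Proof. by case: hom_graded => _ hZD _ _; apply: hZD. Qed.

Lemma homZ k (c : F) x : hom k x -> hom k (c *: x).
Proof. by move=> hx; have := homZD c hx (hom0 k); rewrite addr0. Qed.

Lemma homD k x y : hom k x -> hom k y -> hom k (x + y).
Proof. by move=> hx hy; have := homZD 1 hx hy; rewrite scale1r. Qed.

Lemma homB k x y : hom k x -> hom k y -> hom k (x - y).
Proof. by move=> hx hy; rewrite addrC -scaleN1r; apply: homZD. Qed.

(* Pieces are (degree, vector) pairs; degrees may repeat. *)
Definition hdecomp (v : V) (P : seq (int * V)) : Prop :=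
  {in P, forall p, hom p.1 p.2} /\ v = \sum_(p <- P) p.2.

Definition hcomp (P : seq (int * V)) (k : int) : V := \sum_(p <- P | p.1 == k) p.2.

Definition wsum (c : int -> F) (P : seq (int * V)) : V := \sum_(p <- P) c p.1 *: p.2.

Lemma hom_hcomp P k : {in P, forall p, hom p.1 p.2} -> hom k (hcomp P k).
Proof.
rewrite /hcomp; elim: P => [|p P IH] hP; first by rewrite big_nil; apply: hom0.
rewrite big_cons; have hP' : {in P, forall p, hom p.1 p.2}.
  by move=> q qP; apply: hP; rewrite in_cons qP orbT.
case: eqP => [pk|_]; last exact: IH.
by apply: homD; [rewrite -pk; apply: hP; apply: mem_head | apply: IH].
Qed.

Lemma wsum_hcomp c P (K : seq int) : uniq K -> {subset map fst P <= K} ->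
  wsum c P = \sum_(k <- K) c k *: hcomp P k.
Proof.
move=> uK sK; rewrite /hcomp.
under eq_bigr => k _ do rewrite scaler_sumr big_mkcond.
rewrite exchange_big /wsum big_seq [RHS]big_seq; apply: eq_bigr => p pP.
rewrite -big_mkcond /= (eq_bigr (fun _ => c p.1 *: p.2)); last by move=> j /eqP ->.
rewrite (eq_bigl (pred1 p.1)); last by move=> j; rewrite eq_sym.
rewrite big_const_seq count_uniq_mem // (sK _ (map_f _ pP)) /=.
by rewrite addr0.
Qed.

Lemma hdecomp_wsum1 v P : hdecomp v P -> v = wsum (fun=> 1) P.
Proof. by case=> _ ->; apply: eq_bigr => p _; rewrite scale1r. Qed.

(* Uniqueness of homogeneous components: this is where the directness of the
   sum A = (+)_k A^k enters. *)
Lemma hcomp_unique v P Q k : hdecomp v P -> hdecomp v Q -> hcomp P k = hcomp Q k.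
Proof.
move=> dP dQ; set K := undup (k :: map fst P ++ map fst Q).
have uK : uniq K := undup_uniq _.
have sP : {subset map fst P <= K}.
  by move=> j jP; rewrite mem_undup in_cons mem_cat jP orbT.
have sQ : {subset map fst Q <= K}.
  by move=> j jQ; rewrite mem_undup in_cons mem_cat jQ !orbT.
have sumK P' : hdecomp v P' -> {subset map fst P' <= K} ->
    \sum_(j <- K) hcomp P' j = v.
  move=> dP' sP'; rewrite [RHS](hdecomp_wsum1 dP') (wsum_hcomp _ uK sP').
  by apply: eq_bigr => j _; rewrite scale1r.
pose z j := hcomp P j - hcomp Q j.
have hz : homs hom K (map z K).
  split=> [|i]; first by rewrite size_map.
  rewrite size_map => iK; rewrite (nth_map 0) //.
  by apply: homB; apply: hom_hcomp; [case: dP | case: dQ].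
have z_sum : \sum_(x <- map z K) x = 0 by rewrite big_map sumrB !sumK ?subrr.
case: hom_graded => _ _ _ /(_ K _ uK hz z_sum (index k K)).
rewrite (nth_map 0) ?index_mem ?nth_index ?mem_undup ?mem_head //.
by move/eqP; rewrite subr_eq0 => /eqP.
Qed.

Lemma wsum_hdecomp_eq c v P Q : hdecomp v P -> hdecomp v Q -> wsum c P = wsum c Q.
Proof.
move=> dP dQ; set K := undup (map fst P ++ map fst Q).
have uK : uniq K := undup_uniq _.
rewrite !(wsum_hcomp c uK) => [|j jQ|j jP]; last 2 first.
- by rewrite mem_undup mem_cat jQ orbT.
- by rewrite mem_undup mem_cat jP.
by apply: eq_bigr => j _; rewrite (hcomp_unique _ dP dQ).
Qed.

Lemma hdecomp_exists v : exists P, hdecomp v P.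
Proof.
case: hom_graded => _ _ /(_ v) [ks [xs [_ [sz hxs] ->]]] _.
exists (zip ks xs); split.
  move=> p /(nthP (0, 0)) [i]; rewrite size_zip sz minnn => ilt <-.
  by rewrite nth_zip //=; apply: hxs.
by rewrite -(big_map snd xpredT idfun) /= -[map _ _]/(unzip2 _) unzip2_zip ?sz.
Qed.

(* Multiplication by [c k] on the degree-[k] component. *)
Definition grscale (c : int -> F) (v : V) : V :=
  wsum c (epsilon (inhabits [::]) (hdecomp v)).

Lemma grscaleE c v P : hdecomp v P -> grscale c v = wsum c P.
Proof.
move=> dP; apply: wsum_hdecomp_eq dP.
by apply: epsilon_spec; apply: hdecomp_exists.
Qed.

Lemma grscale_hom c k x : hom k x -> grscale c x = c k *: x.
Proof.
move=> hx; rewrite (grscaleE c (P := [:: (k, x)])) /wsum ?big_seq1 //.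
by split=> [p|]; rewrite ?inE ?big_seq1 // => /eqP ->.
Qed.

Lemma grscale_linear c : linear (grscale c).
Proof.
move=> d u w; have [Pu [hPu ->]] := hdecomp_exists u.
have [Pw [hPw ->]] := hdecomp_exists w.
rewrite !(grscaleE c (conj _ erefl)) //.
set Pdw := [seq (p.1, d *: p.2) | p <- Pu] ++ Pw.
rewrite (grscaleE c (P := Pdw)).
  rewrite /wsum big_cat big_map scaler_sumr; congr (_ + _).
  by apply: eq_bigr => p _ /=; rewrite !scalerA mulrC.
split; last by rewrite big_cat big_map scaler_sumr.
move=> p; rewrite mem_cat => /orP [/mapP [q qP ->] /=|]; last exact: hPw.
by apply: homZ; apply: hPu.
Qed.

Lemma graded_linear_eq (phi psi : V -> V) : linear phi -> linear psi ->
  (forall k x, hom k x -> phi x = psi x) -> phi =1 psi.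
Proof.
move=> phi_lin psi_lin eq_hom v; have [P [hP ->]] := hdecomp_exists v.
rewrite !linear_fun_sum //; apply: eq_big_seq => p pP.
exact/eq_hom/hP.
Qed.

Lemma grscale_cancel c c' : (forall k, c k * c' k = 1) ->
  cancel (grscale c') (grscale c).
Proof.
move=> cc'; apply: (graded_linear_eq (psi := id)) => [d u w|d u w //|k x hx].
  by rewrite !grscale_linear.
by rewrite (grscale_hom _ hx) (grscale_hom _ (homZ _ hx)) scalerA cc' scale1r.
Qed.

End GradedScaling.

Section Multilinear.
Variables (F : fieldType) (V : lmodType F) (g : nat -> seq V -> V).
Hypothesis g_ml : multilinear g.

Lemma multilinear0 pre post : g (size pre + size post).+1 (pre ++ 0 :: post) = 0.
Proof.
have := g_ml pre post 1 0 0; rewrite !scale1r addr0.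
set x := g _ _ => x2x; by apply: (addrI x); rewrite addr0 -x2x.
Qed.

Lemma multilinearZ pre post c u :
  g (size pre + size post).+1 (pre ++ c *: u :: post) =
  c *: g (size pre + size post).+1 (pre ++ u :: post).
Proof. by have := g_ml pre post c u 0; rewrite addr0 multilinear0 addr0. Qed.

Lemma multilinear_mem0 ys : 0 \in ys -> g (size ys) ys = 0.
Proof. by case/splitPr => pre post; rewrite size_cat /= addnS multilinear0. Qed.

Lemma multilinear_linear1 : linear (fun x => g 1%N [:: x]).
Proof. exact: (g_ml [::] [::]). Qed.

Lemma multilinear_scaled (c : nat -> F) : multilinear (fun n xs => c n *: g n xs).
Proof. by move=> xs ys d u v; rewrite g_ml scalerDr !scalerA mulrC. Qed.

Lemma multilinear_map_hom (hom : int -> V -> Prop) (f : V -> V) (c : int -> F) :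
  (forall k x, hom k x -> f x = c k *: x) ->
  forall ks xs pre, homs hom ks xs ->
  g (size pre + size xs) (pre ++ map f xs) =
  (\prod_(k <- ks) c k) *: g (size pre + size xs) (pre ++ xs).
Proof.
move=> f_hom ks xs; elim: xs ks => [|x xs IH] [|k ks] pre hxs.
- by rewrite big_nil scale1r.
- by case: hxs.
- by case: hxs.
- have [hx {}hxs] := homs_cons hxs.
  have Epre : (size (rcons pre (f x)) + size xs = size pre + size (x :: xs))%N.
    by rewrite size_rcons addSnnS.
  rewrite /= -cat_rcons -Epre (IH _ _ hxs) Epre cat_rcons (f_hom _ _ hx) /= addnS.
  by rewrite multilinearZ scalerA big_cons mulrC.
Qed.

End Multilinear.

Section Compositions.

Lemma sumn_comps_fuel fuel n c : c \in comps_fuel fuel n -> sumn c = n.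
Proof.
elim: fuel n c => [|fuel IH] n c /=.
  by case: eqP => [->|_] //; rewrite inE => /eqP ->.
case: eqP => [->|_]; first by rewrite inE => /eqP ->.
case/flatten_mapP => i; rewrite mem_iota add0n => /andP [_ lt_i_n].
by case/mapP => c' /IH e ->; rewrite /= e subnKC.
Qed.

Lemma count_nseq1_comps_fuel fuel n : (n <= fuel)%N ->
  count (pred1 (nseq n 1%N)) (comps_fuel fuel n) = 1%N.
Proof.
elim: fuel n => [|fuel IH] [|n] //= nf.
rewrite count_cat count_map subSS subn0.
rewrite (eq_count (a2 := pred1 (nseq n 1%N))) => [|c]; last first.
  by rewrite /= eqseq_cons eqxx.
rewrite IH // -[RHS]addn0; congr (_ + _)%N; apply/eqP.
rewrite -leqn0 leqNgt -has_count; apply/hasPn => c.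
case/flatten_mapP => i; rewrite mem_iota => /andP [i1 _] /mapP [c' _ ->] /=.
by rewrite eqseq_cons eqSS; case: i i1.
Qed.

Lemma sigma_sign_nseq1 n : sigma_sign (nseq n 1%N) = 0.
Proof.
rewrite /sigma_sign big1 // => -[j lt_j] _ /=; rewrite size_nseq in lt_j.
by rewrite nth_nseq lt_j subrr mulr0.
Qed.

Lemma koszul_exp_nseq1 n ks pre : koszul_exp (nseq n 1%N) ks pre = 0.
Proof. by elim: n ks pre => //= n IH ks pre; rewrite IH subrr mul0r addr0. Qed.

Variables (F : fieldType) (V : lmodType F).

Lemma size_tens_apply (f : nat -> seq V -> V) (bl : seq nat) (xs : seq V) :
  size (tens_apply f bl xs) = size bl.
Proof. by elim: bl xs => //= b bl IH xs; rewrite IH. Qed.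

Lemma tens_apply_nseq1 (f : nat -> seq V -> V) xs :
  tens_apply f (nseq (size xs) 1%N) xs = map (fun x => f 1%N [:: x]) xs.
Proof. by elim: xs => //= x xs <-; rewrite take0 drop0. Qed.

Lemma mem0_tens_apply (f : nat -> seq V -> V) bl xs b :
  (forall ys, f b ys = 0) -> b \in bl -> 0 \in tens_apply f bl xs.
Proof.
move=> fb0; elim: bl xs => //= b' bl IH xs; rewrite inE => /orP [/eqP <-|b_bl].
  by rewrite fb0 mem_head.
by rewrite inE IH ?orbT.
Qed.

Lemma sum_count1 (T : eqType) (s : seq T) (c0 : T) (G : T -> V) :
  count (pred1 c0) s = 1%N -> {in s, forall c, c != c0 -> G c = 0} ->
  \sum_(c <- s) G c = G c0.
Proof.
move=> count1 G0; transitivity (\sum_(c <- s | c == c0) G c0).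
  rewrite [RHS]big_mkcond; apply: eq_big_seq => c cs /=.
  by case: eqP => [->//|/eqP]; apply: G0.
by rewrite big_const_seq count1 /= addr0.
Qed.

End Compositions.

Definition strict_hom (F : fieldType) (V : lmodType F) (f1 : V -> V) :
    nat -> seq V -> V :=
  fun n xs => if n == 1%N then f1 (head 0 xs) else 0.

Section StrictMorphism.
Variables (F : fieldType) (V : lmodType F) (hom : int -> V -> Prop).
Variables (mA mB : nat -> seq V -> V) (f1 : V -> V).

Lemma strict_hom_eq0 n ys : n != 1%N -> strict_hom f1 n ys = 0.
Proof. by rewrite /strict_hom => /negbTE ->. Qed.

(* Only the term r = t = 0, s = n survives. *)
Lemma rst_sum_strict n ks xs : (0 < n)%N -> size xs = n ->
  rst_sum (strict_hom f1) mA n ks xs = f1 (mA n xs).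
Proof.
case: n => // n _ sz; rewrite /rst_sum big_ord_recl [X in _ + X]big1 ?addr0.
  rewrite (big_ord_recr n) /= big1 ?add0r; last first.
    move=> i _; rewrite strict_hom_eq0 ?scaler0 //= subn0 subSS add1n.
    by rewrite -lt0n subn_gt0 ltn_ord.
  rewrite mul0n subn0 subnn add0n take0 drop0 add0n -sz take_size drop_size /=.
  by rewrite /degsum big_nil mulr0 addr0 expr0z scale1r take0.
move=> i _; apply: big1 => j _ /=.
by rewrite strict_hom_eq0 ?scaler0 // /bump /= !addnS.
Qed.

Hypothesis mB_ml : multilinear mB.

(* Only the composition (1, ..., 1) survives, with trivial sign. *)
Lemma compositions_sum_strict ks xs :
  \sum_(ii <- compositions (size xs))
     (-1) ^ (sigma_sign ii + koszul_exp (rev ii) ks 0) *: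
       mB (size ii) (tens_apply (strict_hom f1) (rev ii) xs)
  = mB (size xs) (map f1 xs).
Proof.
rewrite (@sum_count1 _ _ _ _ (nseq (size xs) 1%N)); last 2 first.
- exact: count_nseq1_comps_fuel.
- move=> c c_comp c_ones.
  have [/all_pred1P c1|/allPn [b b_c b1]] := boolP (all (pred1 1%N) c).
    have := sumn_comps_fuel c_comp; rewrite c1 sumn_nseq mul1n => size_c.
    by rewrite c1 size_c eqxx in c_ones.
  rewrite -(size_rev c) -(size_tens_apply (strict_hom f1) (rev c) xs).
  rewrite multilinear_mem0 ?scaler0 //.
  apply: (@mem0_tens_apply _ _ _ _ _ b) => [ys|]; last by rewrite mem_rev.
  exact: strict_hom_eq0.
rewrite rev_nseq sigma_sign_nseq1 koszul_exp_nseq1 addr0 expr0z scale1r size_nseq.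
by rewrite tens_apply_nseq1.
Qed.

Hypothesis hom_graded : graded hom.
Hypothesis f1_lin : linear f1.
Hypothesis f1_deg0 : forall k x, hom k x -> hom k (f1 x).
Hypothesis f1_morph : forall n ks xs, (0 < n)%N -> size xs = n ->
  homs hom ks xs -> f1 (mA n xs) = mB n (map f1 xs).

Lemma Ainf_hom_strict : Ainf_hom hom mA mB (strict_hom f1).
Proof.
split.
- move=> xs ys c u v; rewrite /strict_hom.
  case: xs => [|? ?]; last by rewrite scaler0 addr0.
  by case: ys => [|? ?]; rewrite ?f1_lin // scaler0 addr0.
- move=> n ks xs n_gt0 sz hxs; rewrite /strict_hom.
  case: eqP => [n1|_]; last exact: hom0.
  rewrite {}n1 in sz *; case: xs ks hxs sz => [|x [|? ?]] [|k [|? ?]] [//= _ hx] // _.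
  by rewrite /degsum big_seq1 subrr addr0; apply/f1_deg0/(hx 0%N).
- move=> n ks xs n_gt0 sz hxs.
  by rewrite rst_sum_strict // (f1_morph n_gt0 sz hxs) -sz compositions_sum_strict.
Qed.

Hypothesis mA_ml : multilinear mA.
Hypothesis f1_bij : bijective f1.

Lemma strict_hom_differential x : f1 (mA 1 [:: x]) = mB 1 [:: f1 x].
Proof.
apply: (graded_linear_eq hom_graded (phi := fun y => f1 (mA 1 [:: y]))
  (psi := fun y => mB 1 [:: f1 y])) => [c u w|c u w|k y hy].
- by rewrite /= (multilinear_linear1 mA_ml c u w) f1_lin.
- by rewrite /= f1_lin (multilinear_linear1 mB_ml c).
- by apply: (f1_morph (ks := [:: k])) => //; split=> // -[].
Qed.

Lemma quasi_iso_on_H_strict : quasi_iso_on_H mA mB (strict_hom f1).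
Proof.
have [g1 f1K g1K] := f1_bij.
have g1_diff y : mA 1 [:: g1 y] = g1 (mB 1 [:: y]).
  by rewrite -[LHS]f1K strict_hom_differential g1K.
split=> [x _ [y /= fxy]|y dy0].
  by exists (g1 y); rewrite g1_diff -fxy f1K.
exists (g1 y); split.
  by rewrite g1_diff dy0 -{1}(linear_fun0 f1_lin) f1K.
exists 0; rewrite /strict_hom /= g1K subrr.
by have := multilinear0 mB_ml [::] [::].
Qed.

Lemma Ainf_quasi_iso_strict : Ainf_quasi_iso hom mA mB (strict_hom f1).
Proof. by split; [apply: Ainf_hom_strict | apply: quasi_iso_on_H_strict]. Qed.

End StrictMorphism.

Lemma prod_expfz_affine (F : fieldType) (x : F) (al be : int) (ks : seq int) :
  x != 0 ->
  \prod_(k <- ks) x ^ (al - be * k) = x ^ ((size ks)%:Z * al - be * degsum ks).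
Proof.
move=> x_neq0; elim: ks => [|k ks IH].
  by rewrite big_nil /degsum big_nil /= mul0r mulr0 subrr expr0z.
rewrite big_cons IH -expfzDr // /degsum big_cons -/(degsum ks) /= -addn1 PoszD.
by congr (_ ^ _); ring.
Qed.

Section Rescaling.
Variables (F : fieldType) (V : lmodType F) (hom : int -> V -> Prop).
Variables (m : nat -> seq V -> V) (lambda : F) (a b : int).
Hypotheses (hom_graded : graded hom) (m_ml : multilinear m).
Hypotheses (m_gr : graded_family hom (fun n => 2 - n%:Z) m) (lambda_neq0 : lambda != 0).

Definition rescale_weight (k : int) : F := lambda ^ (2 * a + b - (a + b) * k).

Lemma rescale_weight_neq0 k : rescale_weight k != 0.
Proof. exact: expfz_neq0. Qed.

Lemma grscale_rescale_morph n ks xs : (0 < n)%N -> size xs = n -> homs hom ks xs ->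
  grscale hom rescale_weight (lambda ^ (a * n%:Z + b) *: m n xs) =
  m n (map (grscale hom rescale_weight) xs).
Proof.
move=> n_gt0 sz hxs.
rewrite (grscale_hom hom_graded _ (homZ hom_graded _ (m_gr n_gt0 sz hxs))) scalerA.
have := multilinear_map_hom m_ml (grscale_hom hom_graded rescale_weight) [::] hxs.
rewrite /= sz => ->; congr (_ *: _).
rewrite /rescale_weight prod_expfz_affine // -expfzDr //; congr (_ ^ _).
by case: hxs => -> _; rewrite sz /degsum; ring.
Qed.

End Rescaling.

Theorem corollary2p3 (F : fieldType) (V : lmodType F) (hom : int -> V -> Prop)
    (m : nat -> seq V -> V) (lambda : F) (a b : int) :
  graded hom -> Ainf_algebra hom m -> lambda != 0 ->
  let mt := fun (k : nat) (xs : seq V) => lambda ^ (a * k%:Z + b) *: m k xs in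
  exists f : nat -> seq V -> V, Ainf_quasi_iso hom mt m f.
Proof.
move=> hom_graded [m_ml m_gr _] lambda_neq0 mt.
pose c := rescale_weight lambda a b.
exists (strict_hom (grscale hom c)); apply: Ainf_quasi_iso_strict => //.
- exact: grscale_linear.
- by move=> k x hx; rewrite (grscale_hom hom_graded _ hx); apply: homZ.
- by move=> n ks xs; apply: grscale_rescale_morph.
- exact: (multilinear_scaled m_ml (fun k => lambda ^ (a * k%:Z + b))).
- exists (grscale hom (fun k => (c k)^-1)); apply: grscale_cancel => // k.
    by rewrite mulVf ?rescale_weight_neq0.
  by rewrite mulfV ?rescale_weight_neq0.
Qed.
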